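(* Let $A$ be a sequence algebra, $P\ne0$ a homogeneous normed $A$-module of finite type with each $P_n$ identified isometrically with $l_1^0(\Lambda_n)$, with natural basis $\{e^n_\nu:\nu\in\Lambda_n\}$. Let $S$ be the unit sphere of $P$ and $E(S)$ the set of $z\in S$ such that for every $n$, $z_n$ is a scalar multiple of $e^n_\nu$ for some $\nu\in\Lambda_n$. Then for every normed $A$-module $X$ and every bounded morphism $\varphi:P\to X$, $\|\varphi\|=\sup\{\|\varphi(z)\|:z\in E(S)\}$.
   Context: Modules are contractive ($\|a\cdot x\|\le\|a\|\|x\|$); morphisms are bounded $A$-module maps. $l_1^0(\Lambda)$: finitely supported functions on $\Lambda$ with the $l_1$-norm; its natural basis consists of indicator functions of points. A sequence algebra is a normed algebra of complex sequences with coordinatewise operations containing $c_{00}$ as a dense subalgebra, with $\|\mathbf p^n\|=1$, where $\mathbf p^n$ has $1$ in place $n$ and $0$ elsewhere. $x_n:=\mathbf p^n\cdot x$, $P_n:=\{\mathbf p^n\cdot x\}$. Homogeneous: $\|x_n\|\le\|y_n\|$ for all $n$ implies $\|x\|\le\|y\|$. Finite type: for each $x$, $x_n=0$ for large $n$. *)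

From Stdlib Require Import Reals List ClassicalEpsilon.
Open Scope R_scope.

Definition Cpx : Type := (R * R)%type.
Definition C0 : Cpx := (0, 0).
Definition C1 : Cpx := (1, 0).
Definition Cplus (z w : Cpx) : Cpx := (fst z + fst w, snd z + snd w).
Definition Copp (z : Cpx) : Cpx := (- fst z, - snd z).
Definition Cmult (z w : Cpx) : Cpx :=
  (fst z * fst w - snd z * snd w, fst z * snd w + snd z * fst w).
Definition Cabs (z : Cpx) : R := sqrt (fst z * fst z + snd z * snd z).

Definition seqC := nat -> Cpx.
Definition sadd (a b : seqC) : seqC := fun n => Cplus (a n) (b n).
Definition sopp (a : seqC) : seqC := fun n => Copp (a n).
Definition smul (a b : seqC) : seqC := fun n => Cmult (a n) (b n).
Definition sscal (c : Cpx) (a : seqC) : seqC := fun n => Cmult c (a n).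
Definition szero : seqC := fun _ => C0.
Definition in_c00 (a : seqC) : Prop := exists N, forall n, (N <= n)%nat -> a n = C0.
Definition pn (n : nat) : seqC := fun k => if Nat.eq_dec k n then C1 else C0.

Record SeqAlg := {
  amem : seqC -> Prop;
  anorm : seqC -> R;
  amem_add : forall a b, amem a -> amem b -> amem (sadd a b);
  amem_scal : forall c a, amem a -> amem (sscal c a);
  amem_mul : forall a b, amem a -> amem b -> amem (smul a b);
  amem_c00 : forall a, in_c00 a -> amem a;
  anorm_nonneg : forall a, amem a -> 0 <= anorm a;
  anorm_eq0 : forall a, amem a -> anorm a = 0 -> forall n, a n = C0;
  anorm_scal : forall c a, amem a -> anorm (sscal c a) = Cabs c * anorm a;
  anorm_triangle : forall a b, amem a -> amem b ->
      anorm (sadd a b) <= anorm a + anorm b;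
  anorm_submult : forall a b, amem a -> amem b ->
      anorm (smul a b) <= anorm a * anorm b;
  a_c00_dense : forall a, amem a -> forall eps, 0 < eps ->
      exists b, in_c00 b /\ anorm (sadd a (sopp b)) < eps;
  anorm_pn : forall n, anorm (pn n) = 1
}.

Record NSpace := {
  vcar :> Type;
  vzero : vcar;
  vadd : vcar -> vcar -> vcar;
  vopp : vcar -> vcar;
  vscal : Cpx -> vcar -> vcar;
  vnorm : vcar -> R;
  vadd_assoc : forall x y z, vadd x (vadd y z) = vadd (vadd x y) z;
  vadd_comm : forall x y, vadd x y = vadd y x;
  vadd_0 : forall x, vadd x vzero = x;
  vadd_opp : forall x, vadd x (vopp x) = vzero;
  vscal_1 : forall x, vscal C1 x = x;
  vscal_assoc : forall c d x, vscal c (vscal d x) = vscal (Cmult c d) x;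
  vscal_distr_v : forall c x y, vscal c (vadd x y) = vadd (vscal c x) (vscal c y);
  vscal_distr_c : forall c d x, vscal (Cplus c d) x = vadd (vscal c x) (vscal d x);
  vnorm_nonneg : forall x, 0 <= vnorm x;
  vnorm_eq0 : forall x, vnorm x = 0 -> x = vzero;
  vnorm_scal : forall c x, vnorm (vscal c x) = Cabs c * vnorm x;
  vnorm_triangle : forall x y, vnorm (vadd x y) <= vnorm x + vnorm y
}.
Arguments vzero {_}. Arguments vadd {_}. Arguments vopp {_}.
Arguments vscal {_}. Arguments vnorm {_}.

Record NModule (A : SeqAlg) := {
  msp :> NSpace;
  act : seqC -> msp -> msp;
  act_add_v : forall a x y, amem A a -> act a (vadd x y) = vadd (act a x) (act a y);
  act_add_a : forall a b x, amem A a -> amem A b ->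
      act (sadd a b) x = vadd (act a x) (act b x);
  act_scal_a : forall c a x, amem A a -> act (sscal c a) x = vscal c (act a x);
  act_scal_v : forall c a x, amem A a -> act a (vscal c x) = vscal c (act a x);
  act_mul : forall a b x, amem A a -> amem A b ->
      act (smul a b) x = act a (act b x);
  act_contractive : forall a x, amem A a -> vnorm (act a x) <= anorm A a * vnorm x
}.
Arguments act {_ _}.

Definition is_bounded_morphism {A : SeqAlg} (P X : NModule A) (phi : P -> X) : Prop :=
  (forall x y, phi (vadd x y) = vadd (phi x) (phi y)) /\
  (forall c x, phi (vscal c x) = vscal c (phi x)) /\
  (forall a x, amem A a -> phi (act a x) = act a (phi x)) /\
  (exists K, forall x, vnorm (phi x) <= K * vnorm x).

Definition homogeneous {A : SeqAlg} (P : NModule A) : Prop :=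
  forall x y : P, (forall n, vnorm (act (pn n) x) <= vnorm (act (pn n) y)) ->
    vnorm x <= vnorm y.
Definition finite_type {A : SeqAlg} (P : NModule A) : Prop :=
  forall x : P, exists N, forall n, (N <= n)%nat -> act (pn n) x = vzero.

Definition fin_supp {L : Type} (f : L -> Cpx) : Prop :=
  exists l : list L, forall nu, f nu <> C0 -> In nu l.
Definition l1norm_is {L : Type} (f : L -> Cpx) (r : R) : Prop :=
  exists l : list L, NoDup l /\ (forall nu, f nu <> C0 -> In nu l) /\
    r = fold_right (fun nu s => Cabs (f nu) + s) 0 l.
Definition delta {L : Type} (nu : L) : L -> Cpx :=
  fun mu => if excluded_middle_informative (mu = nu) then C1 else C0.

(* T is a linear isometric bijection from l_1^0(L) onto P_n = {p^n . x} *)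
Definition isometric_ident {A : SeqAlg} (P : NModule A) (n : nat) (L : Type)
    (T : (L -> Cpx) -> P) : Prop :=
  (forall f g, fin_supp f -> fin_supp g ->
     T (fun nu => Cplus (f nu) (g nu)) = vadd (T f) (T g)) /\
  (forall c f, fin_supp f -> T (fun nu => Cmult c (f nu)) = vscal c (T f)) /\
  (forall f, fin_supp f -> exists x : P, T f = act (pn n) x) /\
  (forall x : P, exists f, fin_supp f /\ T f = act (pn n) x) /\
  (forall f, fin_supp f -> l1norm_is f (vnorm (T f))).

Definition ES {A : SeqAlg} (P : NModule A) (Lam : nat -> Type)
    (T : forall n, (Lam n -> Cpx) -> P) (z : P) : Prop :=
  vnorm z = 1 /\
  forall n, act (pn n) z = vzero \/
    exists (nu : Lam n) (c : Cpx), act (pn n) z = vscal c (T n (delta nu)).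

(* Fix a coordinate n and x in P.  Through the isometric identification
   P_n = l_1^0(Lambda_n) write x = w + x_n with x_n = sum_v f(v) e_v, so that
   s := ||x_n|| = sum_v |f(v)|.  For a linear map phi, linearity gives the
   averaging identity  s phi(x) = sum_v |f(v)| phi(w + (s/|f(v)|) f(v) e_v),
   hence for some v the vector  y = w + (s/|f(v)|) f(v) e_v  satisfies
   ||phi(x)|| <= ||phi(y)||, while y agrees with x off n and ||y_n|| <= ||x_n||.
   Performing this successively on the finitely many nonzero coordinates of x
   (finite type) yields z with ||phi x|| <= ||phi z||, every coordinate of z
   on a basis line, and ||z|| <= ||x|| by homogeneity; normalizing z lands in
   E(S).  So the bound of phi on E(S) bounds it on the unit ball, and the two
   suprema coincide. *)
From Stdlib Require Import Reals Lra Lia List ClassicalEpsilon Classical FunctionalExtensionality.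
Open Scope R_scope.

Definition rsum {L} (F : L -> R) (l : list L) : R := fold_right (fun v s => F v + s) 0 l.
Definition vsum {V : NSpace} {L} (F : L -> V) (l : list L) : V :=
  fold_right (fun v acc => vadd (F v) acc) vzero l.

Lemma Cabs_real r : Cabs (r, 0) = Rabs r.
Proof.
  unfold Cabs; simpl. replace (r * r + 0 * 0) with (Rsqr r) by (unfold Rsqr; ring).
  apply sqrt_Rsqr_abs.
Qed.

Lemma Cabs_C0 : Cabs C0 = 0.
Proof. unfold C0. rewrite Cabs_real. apply Rabs_R0. Qed.

Lemma Cabs_C1 : Cabs C1 = 1.
Proof. unfold C1. rewrite Cabs_real. apply Rabs_R1. Qed.

Lemma Cabs_nonneg z : 0 <= Cabs z.
Proof. apply sqrt_pos. Qed.

Lemma rsum_le {L} (F G : L -> R) l : (forall v, In v l -> F v <= G v) -> rsum F l <= rsum G l.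
Proof.
  induction l as [|a l IH]; simpl; intros H; [lra|].
  assert (F a <= G a) by auto. assert (rsum F l <= rsum G l) by auto.
  unfold rsum in *; lra.
Qed.

Lemma rsum_mult_r {L} (a : L -> R) c l : rsum (fun v => a v * c) l = rsum a l * c.
Proof. induction l; simpl; [ring|]. unfold rsum in *; rewrite IHl; ring. Qed.

Lemma rsum_pos_term {L} (a : L -> R) l : 0 < rsum a l -> exists v, In v l /\ 0 < a v.
Proof.
  intro Hs; apply NNPP; intro Hne.
  assert (rsum a l <= rsum (fun _ => 0) l).
  { apply rsum_le; intros v Hv. apply Rnot_lt_le; intro; apply Hne; eauto. }
  assert (Hz : forall l', rsum (fun _ : L => 0) l' = 0)
    by (induction l' as [|b l' IH]; simpl; [|unfold rsum in *; rewrite IH]; ring).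
  rewrite Hz in *. lra.
Qed.

Lemma exists_max {K} (l : list K) (Q : K -> Prop) (h : K -> R) :
  (exists v, In v l /\ Q v) ->
  exists v, In v l /\ Q v /\ forall u, In u l -> Q u -> h u <= h v.
Proof.
  induction l as [|a l IH]; intros [v [Hv HQ]]; [destruct Hv|].
  destruct (classic (exists v, In v l /\ Q v)) as [He|Hne].
  - destruct (IH He) as (b & Hb & HQb & Hmax).
    destruct (classic (Q a /\ h b < h a)) as [[HQa Hlt]|Hn].
    + exists a. split; [left; auto|split; auto].
      intros u [<-|Hu] HQu; [lra|]. specialize (Hmax u Hu HQu); lra.
    + exists b. split; [right; auto|split; auto].
      intros u [<-|Hu] HQu; auto. apply Rnot_lt_le; intro; apply Hn; auto.
  - destruct Hv as [->|Hv]; [|exfalso; apply Hne; eauto].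
    exists v. split; [left; auto|split; auto].
    intros u [->|Hu] HQu; [lra|]. exfalso; apply Hne; eauto.
Qed.

Section NormedSpace.
Variable V : NSpace.

Lemma vscal_C0 (x : V) : vscal C0 x = vzero.
Proof. apply vnorm_eq0. rewrite vnorm_scal, Cabs_C0. ring. Qed.

Lemma vnorm_zero : vnorm (@vzero V) = 0.
Proof. rewrite <- (vscal_C0 vzero), vnorm_scal, Cabs_C0. ring. Qed.

Lemma vscal_zero c : vscal c (@vzero V) = vzero.
Proof. apply vnorm_eq0. rewrite vnorm_scal, vnorm_zero. ring. Qed.

Lemma vadd_0l (x : V) : vadd vzero x = x.
Proof. rewrite vadd_comm. apply vadd_0. Qed.

Lemma vminus_self (y : V) : vadd y (vscal (-1, 0) y) = vzero.
Proof.
  rewrite <- (vscal_1 _ y) at 1. rewrite <- vscal_distr_c.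
  replace (Cplus C1 (-1, 0)) with C0 by (unfold Cplus, C1, C0; simpl; f_equal; ring).
  apply vscal_C0.
Qed.

Lemma vsplit (x y : V) : vadd (vadd x (vscal (-1, 0) y)) y = x.
Proof.
  rewrite <- vadd_assoc, (vadd_comm _ (vscal _ y)), vminus_self. apply vadd_0.
Qed.

Lemma vswap4 (p q r t : V) : vadd (vadd p q) (vadd r t) = vadd (vadd p r) (vadd q t).
Proof. rewrite <- !vadd_assoc. f_equal. rewrite !vadd_assoc. f_equal. apply vadd_comm. Qed.

Lemma vsum_ext {L} (F G : L -> V) l : (forall v, In v l -> F v = G v) -> vsum F l = vsum G l.
Proof.
  induction l; simpl; intros H; auto.
  rewrite H by (left; auto). f_equal. apply IHl; intros; apply H; right; auto.
Qed.

Lemma vnorm_sum {L} (F : L -> V) l : vnorm (vsum F l) <= rsum (fun v => vnorm (F v)) l.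
Proof.
  induction l; simpl; [rewrite vnorm_zero; lra|].
  eapply Rle_trans; [apply vnorm_triangle|]. unfold rsum in *; lra.
Qed.

Lemma vscal_sum {L} c (F : L -> V) l : vscal c (vsum F l) = vsum (fun v => vscal c (F v)) l.
Proof. induction l; simpl; [apply vscal_zero|]. rewrite vscal_distr_v, IHl. auto. Qed.

Lemma vsum_weighted_split {L} (a : L -> R) c (u : L -> V) (w : V) l :
  vadd (vscal (rsum a l, 0) w) (vscal (c, 0) (vsum u l))
  = vsum (fun v => vadd (vscal (a v, 0) w) (vscal (c, 0) (u v))) l.
Proof.
  rewrite vscal_sum. induction l as [|b l IH]; simpl.
  - change (0, 0) with C0. rewrite vscal_C0. apply vadd_0.
  - replace (a b + rsum a l, 0) with (Cplus (a b, 0) (rsum a l, 0))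
      by (unfold Cplus; simpl; f_equal; ring).
    rewrite vscal_distr_c, vswap4. unfold rsum, vsum in *. rewrite IH. auto.
Qed.

Lemma vnorm_weighted_sum {L} (a : L -> R) (u : L -> V) B l :
  (forall v, In v l -> 0 <= a v) ->
  (forall v, In v l -> 0 < a v -> vnorm (u v) <= B) ->
  vnorm (vsum (fun v => vscal (a v, 0) (u v)) l) <= rsum a l * B.
Proof.
  intros Ha Hu. eapply Rle_trans; [apply vnorm_sum|].
  rewrite <- rsum_mult_r. apply rsum_le. intros v Hv.
  rewrite vnorm_scal, Cabs_real, Rabs_pos_eq by auto.
  destruct (Ha v Hv) as [Hpos|H0]; [apply Rmult_le_compat_l; auto; lra|].
  rewrite <- H0. lra.
Qed.

End NormedSpace.

Section LinearMap.
Variables V W : NSpace.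
Variable phi : V -> W.
Hypothesis phi_add : forall x y, phi (vadd x y) = vadd (phi x) (phi y).
Hypothesis phi_scal : forall c x, phi (vscal c x) = vscal c (phi x).

Lemma phi_zero : phi vzero = vzero.
Proof. rewrite <- (vscal_C0 _ vzero), phi_scal. apply vscal_C0. Qed.

Lemma phi_vsum {L} (F : L -> V) l : phi (vsum F l) = vsum (fun v => phi (F v)) l.
Proof. induction l; simpl; [apply phi_zero|]. rewrite phi_add, IHl. auto. Qed.

Lemma linear_average {L} (a : L -> R) (g : L -> V) (w : V) l :
  (forall v, In v l -> a v = 0 -> g v = vzero) ->
  vscal (rsum a l, 0) (phi (vadd w (vsum g l)))
  = vsum (fun v => vscal (a v, 0) (phi (vadd w (vscal (rsum a l / a v, 0) (g v))))) l.
Proof.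
  intros Hg. rewrite phi_add, vscal_distr_v, phi_vsum, vsum_weighted_split.
  apply vsum_ext. intros v Hv.
  destruct (Req_dec (a v) 0) as [H0|Hnz].
  - rewrite (Hg v Hv H0), H0, phi_zero, vscal_zero, vadd_0. change (0, 0) with C0.
    rewrite !vscal_C0. auto.
  - rewrite phi_add, phi_scal, vscal_distr_v, vscal_assoc. do 3 f_equal.
    unfold Cmult; simpl; f_equal; field; auto.
Qed.

Lemma linear_max_principle {L} (a : L -> R) (g : L -> V) (w : V) l :
  (forall v, In v l -> 0 <= a v) ->
  (forall v, In v l -> a v = 0 -> g v = vzero) ->
  0 < rsum a l ->
  exists v, In v l /\ 0 < a v /\
    vnorm (phi (vadd w (vsum g l))) <= vnorm (phi (vadd w (vscal (rsum a l / a v, 0) (g v)))).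
Proof.
  intros Ha Hg Hs.
  set (h := fun v => vnorm (phi (vadd w (vscal (rsum a l / a v, 0) (g v))))).
  destruct (exists_max l (fun v => 0 < a v) h (rsum_pos_term a l Hs)) as (v0 & Hv0 & Ha0 & Hmax).
  exists v0. split; [auto|split; [auto|]].
  apply Rmult_le_reg_l with (rsum a l); auto.
  rewrite <- (Rabs_pos_eq (rsum a l)) at 1 by lra.
  rewrite <- Cabs_real, <- vnorm_scal, linear_average by auto.
  apply vnorm_weighted_sum; auto.
Qed.

End LinearMap.

Lemma pn_mem A n : amem A (pn n).
Proof.
  apply amem_c00. exists (S n). intros k Hk. unfold pn. destruct Nat.eq_dec; [lia|auto].
Qed.

Lemma pn_mul_same n : smul (pn n) (pn n) = pn n.
Proof.
  apply functional_extensionality; intro k; unfold smul, pn.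
  destruct Nat.eq_dec; unfold Cmult, C1, C0; simpl; f_equal; ring.
Qed.

Lemma pn_mul_diff m n : m <> n -> smul (pn m) (pn n) = sscal C0 (pn 0).
Proof.
  intro H. apply functional_extensionality; intro k; unfold smul, sscal, pn.
  destruct (Nat.eq_dec k m), (Nat.eq_dec k n), (Nat.eq_dec k 0); try lia;
    unfold Cmult, C1, C0; simpl; f_equal; ring.
Qed.

Section Coordinates.
Variable A : SeqAlg.
Variable P : NModule A.

Lemma act_idem n (x : P) : act (pn n) (act (pn n) x) = act (pn n) x.
Proof. rewrite <- act_mul by apply pn_mem. rewrite pn_mul_same; auto. Qed.

Lemma act_orth m n (x : P) : m <> n -> act (pn m) (act (pn n) x) = vzero.
Proof.
  intro H. rewrite <- act_mul by apply pn_mem. rewrite pn_mul_diff by auto.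
  rewrite act_scal_a by apply pn_mem. apply vscal_C0.
Qed.

Lemma act_vadd m (x y : P) : act (pn m) (vadd x y) = vadd (act (pn m) x) (act (pn m) y).
Proof. apply act_add_v, pn_mem. Qed.

Lemma act_vscal m c (x : P) : act (pn m) (vscal c x) = vscal c (act (pn m) x).
Proof. apply act_scal_v, pn_mem. Qed.

Definition strip (n : nat) (x : P) : P := vadd x (vscal (-1, 0) (act (pn n) x)).

Lemma strip_same n x : act (pn n) (strip n x) = vzero.
Proof. unfold strip. rewrite act_vadd, act_vscal, act_idem. apply vminus_self. Qed.

Lemma strip_other m n x : m <> n -> act (pn m) (strip n x) = act (pn m) x.
Proof. intro H. unfold strip. rewrite act_vadd, act_vscal, act_orth, vscal_zero by auto. apply vadd_0. Qed.

Lemma strip_split n x : vadd (strip n x) (act (pn n) x) = x.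
Proof. apply vsplit. Qed.

End Coordinates.

Lemma delta_fin_supp {L} (v : L) : fin_supp (delta v).
Proof.
  exists (v :: nil). intros mu H. unfold delta in H.
  destruct excluded_middle_informative; [subst; left; auto|contradiction].
Qed.

Lemma scaled_delta_fin_supp {L} c (v : L) : fin_supp (fun mu => Cmult c (delta v mu)).
Proof.
  exists (v :: nil). intros mu H. unfold delta in H.
  destruct excluded_middle_informative; [subst; left; auto|].
  exfalso; apply H; unfold Cmult, C0; simpl; f_equal; ring.
Qed.

Lemma rsum_delta_le1 {L} (v : L) l : NoDup l -> rsum (fun mu => Cabs (delta v mu)) l <= 1.
Proof.
  assert (Hout : forall l', ~ In v l' -> rsum (fun mu => Cabs (delta v mu)) l' = 0).
  { induction l' as [|b l' IH]; simpl; intros H; auto.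
    unfold delta at 1; destruct excluded_middle_informative as [->|_]; [tauto|].
    rewrite Cabs_C0, IH by tauto. ring. }
  induction l as [|b l IH]; simpl; intros H; [lra|].
  apply NoDup_cons_iff in H as [Hb Hl].
  unfold delta at 1; destruct excluded_middle_informative as [->|_].
  - rewrite Cabs_C1, Hout by auto. lra.
  - rewrite Cabs_C0. specialize (IH Hl). unfold rsum in *. lra.
Qed.

Section Identification.
Variable A : SeqAlg.
Variable P : NModule A.
Variable n : nat.
Variable L : Type.
Variable T : (L -> Cpx) -> P.
Hypothesis HT : isometric_ident P n L T.

Lemma T_coord_same h : fin_supp h -> act (pn n) (T h) = T h.
Proof. intro Hh. destruct HT as (_ & _ & Hrange & _). destruct (Hrange h Hh) as [x ->]. apply act_idem. Qed.

Lemma T_coord_other m h : fin_supp h -> m <> n -> act (pn m) (T h) = vzero.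
Proof. intros Hh Hm. destruct HT as (_ & _ & Hrange & _). destruct (Hrange h Hh) as [x ->]. apply act_orth; auto. Qed.

Lemma T_delta_norm v : vnorm (T (delta v)) <= 1.
Proof.
  destruct HT as (_ & _ & _ & _ & Hnorm).
  destruct (Hnorm _ (delta_fin_supp v)) as (l & Hnd & _ & ->). apply rsum_delta_le1; auto.
Qed.

Lemma T_zero : T (fun _ => C0) = vzero.
Proof.
  destruct HT as (_ & Hscal & _).
  replace (fun _ : L => C0) with (fun nu : L => Cmult C0 ((fun _ => C0) nu))
    by (apply functional_extensionality; intro; unfold Cmult, C0; simpl; f_equal; ring).
  rewrite Hscal by (exists nil; intros mu H; contradiction). apply vscal_C0.
Qed.

Lemma T_expansion l : NoDup l -> forall f, (forall v, f v <> C0 -> In v l) ->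
  T f = vsum (fun v => vscal (f v) (T (delta v))) l.
Proof.
  destruct HT as (Hadd & Hscal & _).
  induction l as [|b l IH]; intros Hnd f Hf; simpl.
  - rewrite <- T_zero. f_equal. apply functional_extensionality; intro mu.
    destruct (classic (f mu = C0)) as [E|E]; [auto|destruct (Hf mu E)].
  - apply NoDup_cons_iff in Hnd as [Hb Hnd].
    set (f' := fun mu => if excluded_middle_informative (mu = b) then C0 else f mu).
    assert (Hf' : forall v, f' v <> C0 -> In v l).
    { intros v Hv. unfold f' in Hv. destruct excluded_middle_informative; [contradiction|].
      destruct (Hf v Hv); [subst; contradiction|auto]. }
    replace f with (fun mu => Cplus (Cmult (f b) (delta b mu)) (f' mu)) at 1.
    2:{ apply functional_extensionality; intro mu. unfold f', delta.
        destruct excluded_middle_informative; [subst|];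
          unfold Cplus, Cmult, C1, C0; apply injective_projections; simpl; ring. }
    rewrite Hadd, Hscal, (IH Hnd f' Hf')
      by (auto using delta_fin_supp, scaled_delta_fin_supp; exists l; auto).
    f_equal. apply vsum_ext. intros v Hv. unfold f'.
    destruct excluded_middle_informative; [subst; contradiction|auto].
Qed.

End Identification.

Section Reduction.
Variable A : SeqAlg.
Variables P X : NModule A.
Variable phi : P -> X.
Hypothesis phi_add : forall x y, phi (vadd x y) = vadd (phi x) (phi y).
Hypothesis phi_scal : forall c x, phi (vscal c x) = vscal c (phi x).
Variable Lam : nat -> Type.
Variable T : forall n, (Lam n -> Cpx) -> P.
Hypothesis HT : forall n, isometric_ident P n (Lam n) (T n).

Definition basis_coord (z : P) (m : nat) : Prop :=
  act (pn m) z = vzero \/ exists (v : Lam m) c, act (pn m) z = vscal c (T m (delta v)).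

Lemma coordinate_reduction n (x : P) : exists y : P,
  (forall m, m <> n -> act (pn m) y = act (pn m) x) /\
  basis_coord y n /\
  vnorm (act (pn n) y) <= vnorm (act (pn n) x) /\
  vnorm (phi x) <= vnorm (phi y).
Proof.
  destruct (HT n) as (_ & _ & _ & Hsurj & Hnorm).
  destruct (Hsurj x) as (f & Hfs & Hf).
  destruct (Hnorm f Hfs) as (l & Hnd & Hcov & Hs). rewrite Hf in Hs.
  change (fold_right _ 0 l) with (rsum (fun v => Cabs (f v)) l) in Hs.
  set (a := fun v => Cabs (f v)) in Hs.
  set (g := fun v => vscal (f v) (T n (delta v))).
  assert (Hx : x = vadd (strip A P n x) (vsum g l))
    by (unfold g; rewrite <- (T_expansion _ _ n _ _ (HT n) l Hnd f Hcov), Hf;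
        symmetry; apply strip_split).
  destruct (Rle_lt_dec (rsum a l) 0) as [Hs0|Hspos].
  { exists x. split; [auto|split; [left|split; apply Rle_refl]].
    apply vnorm_eq0. pose proof (vnorm_nonneg _ (act (pn n) x)). lra. }
  destruct (linear_max_principle _ _ phi phi_add phi_scal a g (strip A P n x) l)
    as (v0 & Hv0 & Ha0 & Hbound); auto.
  - intros v _. apply Cabs_nonneg.
  - intros v _ Ha. apply vnorm_eq0. unfold g. rewrite vnorm_scal. fold (a v). rewrite Ha. ring.
  - set (c := (rsum a l / a v0, 0)) in Hbound.
    assert (Hgn : forall m, act (pn m) (g v0) = if Nat.eq_dec m n then g v0 else vzero).
    { intro m. unfold g. rewrite act_vscal. destruct Nat.eq_dec as [->|Hm].
      - rewrite (T_coord_same _ _ _ _ _ (HT n)) by apply delta_fin_supp. auto.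
      - rewrite (T_coord_other _ _ _ _ _ (HT n)), vscal_zero by (auto using delta_fin_supp).
        auto. }
    assert (Hyn : act (pn n) (vadd (strip A P n x) (vscal c (g v0))) = vscal c (g v0)).
    { rewrite act_vadd, act_vscal, strip_same, Hgn, vadd_0l. destruct Nat.eq_dec; auto; lia. }
    exists (vadd (strip A P n x) (vscal c (g v0))). rewrite <- Hx in Hbound.
    split; [|split; [|split]]; auto.
    + intros m Hm. rewrite act_vadd, act_vscal, strip_other, Hgn by auto.
      destruct Nat.eq_dec; [contradiction|]. rewrite vscal_zero. apply vadd_0.
    + right. exists v0, (Cmult c (f v0)). rewrite Hyn. apply vscal_assoc.
    + rewrite Hyn, Hs. unfold g. rewrite !vnorm_scal. fold (a v0).
      unfold c. rewrite Cabs_real, Rabs_pos_eq by (apply Rlt_le, Rdiv_lt_0_compat; lra).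
      pose proof (T_delta_norm _ _ n _ _ (HT n) v0).
      pose proof (vnorm_nonneg _ (T n (delta v0))).
      replace (rsum a l / a v0 * (a v0 * vnorm (T n (delta v0))))
        with (rsum a l * vnorm (T n (delta v0))) by (field; lra).
      nra.
Qed.

Lemma reduce_first_coordinates k : forall x : P, exists z : P,
  (forall m, vnorm (act (pn m) z) <= vnorm (act (pn m) x)) /\
  (forall m, (m < k)%nat -> basis_coord z m) /\
  (forall m, (k <= m)%nat -> act (pn m) z = act (pn m) x) /\
  vnorm (phi x) <= vnorm (phi z).
Proof.
  induction k as [|k IH]; intros x.
  - exists x. repeat split; intros; try lia; auto using Rle_refl.
  - destruct (IH x) as (z & Z1 & Z2 & Z3 & Z4).
    destruct (coordinate_reduction k z) as (y & Y1 & Y2 & Y3 & Y4).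
    exists y. split; [|split; [|split]].
    + intro m. destruct (Nat.eq_dec m k) as [->|Hm]; [eauto using Rle_trans|].
      rewrite Y1; auto.
    + intros m Hm. destruct (Nat.eq_dec m k) as [->|Hmk]; auto.
      unfold basis_coord. rewrite Y1 by auto. apply Z2; lia.
    + intros m Hm. rewrite Y1, Z3 by lia. auto.
    + lra.
Qed.

Lemma reduce_to_basis_coords (Hhom : homogeneous P) (Hfin : finite_type P) (x : P) :
  exists z : P, vnorm z <= vnorm x /\ (forall m, basis_coord z m) /\ vnorm (phi x) <= vnorm (phi z).
Proof.
  destruct (Hfin x) as [N HN]. destruct (reduce_first_coordinates N x) as (z & Z1 & Z2 & Z3 & Z4).
  exists z. split; [apply Hhom; auto|split; auto].
  intro m. destruct (Nat.lt_ge_cases m N); auto. left. rewrite Z3, HN; auto.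
Qed.

Lemma normalize_to_ES (z : P) : z <> vzero -> (forall m, basis_coord z m) ->
  ES P Lam T (vscal (/ vnorm z, 0) z) /\ z = vscal (vnorm z, 0) (vscal (/ vnorm z, 0) z).
Proof.
  intros Hz Hg. assert (Hp : vnorm z > 0).
  { destruct (vnorm_nonneg _ z); auto. exfalso; apply Hz, vnorm_eq0; auto. }
  split; [split|].
  - rewrite vnorm_scal, Cabs_real, Rabs_pos_eq by (apply Rlt_le, Rinv_0_lt_compat; lra).
    field; lra.
  - intro n. rewrite act_vscal. destruct (Hg n) as [H|(v & c & H)]; rewrite H.
    + left; apply vscal_zero.
    + right. exists v, (Cmult (/ vnorm z, 0) c). apply vscal_assoc.
  - rewrite vscal_assoc, <- (vscal_1 _ z) at 1. f_equal.
    unfold Cmult, C1; simpl; f_equal; field; lra.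
Qed.

Lemma ES_bound_on_ball (Hhom : homogeneous P) (Hfin : finite_type P) b : 0 <= b ->
  (forall z, ES P Lam T z -> vnorm (phi z) <= b) ->
  forall x, vnorm x <= 1 -> vnorm (phi x) <= b.
Proof.
  intros b0 Hb x Hx.
  destruct (reduce_to_basis_coords Hhom Hfin x) as (z & Z1 & Zg & Zn).
  destruct (classic (z = vzero)) as [->|E].
  - rewrite phi_zero, vnorm_zero in Zn by auto. lra.
  - destruct (normalize_to_ES z E Zg) as [HES Hz].
    rewrite Hz, phi_scal, vnorm_scal, Cabs_real, Rabs_pos_eq in Zn by apply vnorm_nonneg.
    specialize (Hb _ HES). pose proof (vnorm_nonneg _ z).
    pose proof (vnorm_nonneg _ (phi (vscal (/ vnorm z, 0) z))). nra.
Qed.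

End Reduction.

Lemma ES_nonempty A (P : NModule A) Lam T (HT : forall n, isometric_ident P n (Lam n) (T n)) :
  (exists x : P, x <> vzero) -> homogeneous P -> finite_type P -> exists z, ES P Lam T z.
Proof.
  intros [x Hx] Hhom Hfin.
  destruct (reduce_to_basis_coords A P P (fun y => y) (fun _ _ => eq_refl) (fun _ _ => eq_refl)
              Lam T HT Hhom Hfin x) as (z & _ & Zg & Zn).
  assert (Hz : z <> vzero).
  { intros ->. rewrite vnorm_zero in Zn. apply Hx, vnorm_eq0. pose proof (vnorm_nonneg _ x). lra. }
  destruct (normalize_to_ES A P Lam T z Hz Zg) as [H _]. eauto.
Qed.

Lemma is_lub_cofinal (S1 S2 : R -> Prop) M :
  (forall r, S1 r -> S2 r) -> (forall b, is_upper_bound S1 b -> is_upper_bound S2 b) ->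
  (is_lub S2 M <-> is_lub S1 M).
Proof.
  intros Hsub Hub. split; intros [HM Hleast]; split.
  - intros r Hr; apply HM, Hsub, Hr.
  - intros b Hb; apply Hleast, Hub, Hb.
  - apply Hub, HM.
  - intros b Hb; apply Hleast; intros r Hr; apply Hb, Hsub, Hr.
Qed.

Theorem mainTheorem19 (A : SeqAlg) (P : NModule A)
  (Hnz : exists x : P, x <> vzero)
  (Hhom : homogeneous P) (Hfin : finite_type P)
  (Lam : nat -> Type) (T : forall n, (Lam n -> Cpx) -> P)
  (HT : forall n, isometric_ident P n (Lam n) (T n)) :
  forall (X : NModule A) (phi : P -> X), is_bounded_morphism P X phi ->
  forall M : R,
    is_lub (fun r => exists x : P, vnorm x <= 1 /\ r = vnorm (phi x)) M <->
    is_lub (fun r => exists z : P, ES P Lam T z /\ r = vnorm (phi z)) M.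
Proof.
  intros X phi (Hadd & Hscal & _) M.
  destruct (ES_nonempty A P Lam T HT Hnz Hhom Hfin) as [z0 Hz0].
  apply is_lub_cofinal.
  - intros r (z & [Hz _] & ->). exists z. split; [lra|auto].
  - intros b Hb r (x & Hx & ->).
    assert (b0 : 0 <= b) by (apply Rle_trans with (vnorm (phi z0)); [apply vnorm_nonneg|eauto]).
    apply (ES_bound_on_ball A P X phi Hadd Hscal Lam T HT Hhom Hfin b b0); auto.
    intros z Hz. apply Hb. eauto.
Qed.
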